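(* Let $\beta\in\mathbb{F}_{p^m}\setminus\{0\}$ and let $\mathcal{C}=\left\langle\left(x^2+\gamma x+\frac{\gamma^2}{2}\right)^i\left(x^2-\gamma x+\frac{\gamma^2}{2}\right)^j\right\rangle$ be an ideal of $R[x]/\langle x^{4p^s}-(\alpha+\beta u)\rangle$ with $0\le i,j\le 2p^s$. Then $|\mathcal{C}|=p^{m(8p^s-2i-2j)}$.
   Context: Let $p$ be an odd prime and $m,s$ positive integers with $p^m\equiv 3\pmod 4$; $\mathbb{F}_{p^m}$ is the field with $p^m$ elements and $R=\mathbb{F}_{p^m}[u]/\langle u^2\rangle$. Fix $\alpha\in\mathbb{F}_{p^m}\setminus\{0\}$ that is not a square in $\mathbb{F}_{p^m}$, let $\alpha_0\in\mathbb{F}_{p^m}$ satisfy $\alpha_0^{p^s}=\alpha$, and let $\gamma\in\mathbb{F}_{p^m}$ satisfy $\gamma^4+4\alpha_0=0$. *)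

From HB Require Import structures.
From mathcomp Require Import all_boot all_order all_algebra all_field.
Set Implicit Arguments. Unset Strict Implicit. Unset Printing Implicit Defensive.
Import GRing.Theory.
Local Open Scope ring_scope.

(* R = F[u]/<u^2>, realised as the quotient ring {poly %/ 'X^2} (u = 'qX). *)
Definition dualR (F : finFieldType) := {poly %/ ('X^2 : {poly F})}.

Definition dual_elt (F : finFieldType) (a b : F) : dualR F :=
  in_qpoly ('X^2) (a%:P + b%:P * 'X).

Definition dual_const (F : finFieldType) (a : F) : dualR F := dual_elt a 0.

Definition quot_ring (F : finFieldType) (n : nat) (c : dualR F) :=
  {poly %/ ('X^n - c%:P : {poly dualR F})}.

Definition principal_ideal (F : finFieldType) (n : nat) (c : dualR F)
  (a : quot_ring n c) : {set quot_ring n c} :=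
  [set b | [exists r : quot_ring n c, b == r * a]].

From HB Require Import structures.
From mathcomp Require Import all_boot all_order all_algebra all_field.
From mathcomp Require Import ring zify.
Set Implicit Arguments.
Unset Strict Implicit.
Unset Printing Implicit Defensive.
Import GRing.Theory.
Local Open Scope ring_scope.

(* In R[x]/<x^N - (alpha + beta u)> we have u = beta^-1 (x^N - alpha), so the
   map F[x] -> R[x]/<x^N - (alpha + beta u)> is onto; since the polynomials of
   degree < 2N and the quotient both have q^(2N) elements (q = |F|), its kernel is
   <(x^N - alpha)^2>.  For N = 4p^s, the factorisation g1 g2 = x^4 - alpha0 and
   the Frobenius give (x^N - alpha)^2 = (g1 g2)^(2p^s), so the ideal generated by
   g1^i g2^j is isomorphic to F[x]/<g1^(2p^s-i) g2^(2p^s-j)>, of size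
   q^(8p^s - 2i - 2j). *)

Lemma natr2_neq0 (F : fieldType) (p : nat) :
  odd p -> p \in [pchar F] -> (2%:R : F) != 0.
Proof.
move=> p_odd p_char; rewrite natf_neq0_pchar (eq_pnat _ (eq_negn (pcharf_eq p_char))).
by rewrite pnatE //= inE /=; apply: contraTneq p_odd => <-.
Qed.

Lemma exprXnsubC_pchar (F : fieldType) (p n k : nat) (a : F) : p \in [pchar F] ->
  ('X^n - a%:P) ^+ (p ^ k) = 'X^(n * p ^ k) - (a ^+ (p ^ k))%:P :> {poly F}.
Proof.
move=> p_char; have pk_char : [pchar {poly F}].-nat (p ^ k)%N.
  by rewrite pnatX (pnatE _ (GRing.pcharf_prime p_char)) pchar_poly p_char.
by rewrite exprDn_pchar // GRing.exprNn_pchar // -exprM rmorphXn.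
Qed.

Lemma quartic_factor (F : fieldType) (g a : F) :
  (2%:R : F) != 0 -> g ^+ 4 + 4%:R * a = 0 ->
  ('X^2 + g%:P * 'X + (g ^+ 2 / 2%:R)%:P) * ('X^2 + (- g)%:P * 'X + (g ^+ 2 / 2%:R)%:P)
    = 'X^4 - a%:P :> {poly F}.
Proof.
move=> two_neq0 g_root; set c := g ^+ 2 / 2%:R.
have c_twice : c * 2%:R = g ^+ 2 by rewrite mulfVK.
have c_sqr : c ^+ 2 = - a.
  have four_neq0 : (4%:R : F) != 0 by rewrite (natrM F 2 2) mulf_neq0.
  apply: (mulfI four_neq0); rewrite mulrN -[RHS]add0r -g_root addrK /c; field.
  exact: two_neq0.
transitivity ('X^4 + (c * 2%:R - g ^+ 2)%:P * 'X^2 + (c ^+ 2)%:P : {poly F}).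
  by rewrite polyCN; ring.
by rewrite c_twice subrr mul0r addr0 c_sqr polyCN.
Qed.

Lemma size_quadratic (F : fieldType) (a b : F) :
  size ('X^2 + a%:P * 'X + b%:P) = 3%N.
Proof.
rewrite -addrA size_polyDl size_polyXn // size_MXaddC.
by case: ifP => //; rewrite size_polyC; case: (a != 0).
Qed.

Lemma size_quadratic_prod (F : fieldType) (a b a' b' : F) (k l : nat) :
  (size (('X^2 + a%:P * 'X + b%:P) ^+ k * ('X^2 + a'%:P * 'X + b'%:P) ^+ l)).-1
    = (2 * (k + l))%N.
Proof.
have Q_neq0 (c d : F) : 'X^2 + c%:P * 'X + d%:P != 0.
  by rewrite -size_poly_gt0 size_quadratic.
have size_Qn (c d : F) n : size (('X^2 + c%:P * 'X + d%:P) ^+ n) = (2 * n).+1.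
  by rewrite -[LHS]prednK ?size_poly_gt0 ?expf_neq0 // size_exp size_quadratic mulnC.
by rewrite size_mul ?expf_neq0 // !size_Qn addSn addnS mulnDr.
Qed.

Lemma map_quadratic (aR rR : nzRingType) (f : {rmorphism aR -> rR}) (a b : aR) :
  map_poly f ('X^2 + a%:P * 'X + b%:P) = 'X^2 + (f a)%:P * 'X + (f b)%:P.
Proof. by rewrite !rmorphD rmorphM /= map_polyXn map_polyX !map_polyC. Qed.

Section QpolyComplements.
Variables (R : nzRingType) (h : {poly R}).

Lemma in_qpolyC a : in_qpoly h a%:P = qpolyC h a.
Proof.
apply: val_inj; apply: in_qpoly_small.
by rewrite (leq_ltn_trans (size_polyC_leq1 a)) // size_mk_monic_gt1.
Qed.

Lemma in_qpoly_qpoly (p : {poly %/ h}) : in_qpoly h p = p.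
Proof. by apply: val_inj; apply: in_qpoly_small; apply: size_mk_monic. Qed.

Hypotheses (h_gt1 : (1 < size h)%N) (h_monic : h \is monic).

Lemma mk_monic_id : mk_monic h = h.
Proof. by rewrite /mk_monic h_gt1 h_monic. Qed.

Lemma in_qpoly_self : in_qpoly h h = 0.
Proof. by apply: val_inj; rewrite /= mk_monic_id Pdiv.RingMonic.rmodpp. Qed.

Lemma size_qpoly (p : {poly %/ h}) : (size (p : {poly R}) < size h)%N.
Proof. by rewrite -{2}mk_monic_id size_mk_monic. Qed.

End QpolyComplements.

Section DualNumbers.
Variable F : finFieldType.
Local Notation R := (dualR F).
Local Notation emb := (qpolyC ('X^2 : {poly F})).

Lemma dual_eltE a b : dual_elt a b = emb a + emb b * 'qX.
Proof. by rewrite /dual_elt rmorphD rmorphM /= !in_qpolyC. Qed.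

Lemma dual_constE a : dual_const a = emb a.
Proof. by rewrite /dual_const dual_eltE rmorph0 mul0r addr0. Qed.

Lemma qX_sqr : 'qX ^+ 2 = 0 :> R.
Proof. by rewrite /qpolyX -rmorphXn /= in_qpoly_self ?size_polyXn ?monicXn. Qed.

Lemma dual_eltK (r : R) :
  dual_elt ((r : {poly F})`_0) ((r : {poly F})`_1) = r.
Proof.
rewrite /dual_elt; set q := r : {poly F}.
have -> : (q`_0)%:P + (q`_1)%:P * 'X = q.
  have q_small : (size q <= 2)%N.
    by rewrite -ltnS -(size_polyXn F 2) size_qpoly ?size_polyXn ?monicXn.
  apply/polyP=> k; rewrite coefD coefCM coefC coefX.
  case: k => [|[|k]]; rewrite ?mulr0 ?mulr1 ?addr0 ?add0r //.
  by rewrite nth_default // (leq_trans q_small).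
exact: in_qpoly_qpoly.
Qed.

Lemma card_dual : #|R| = (#|F| ^ 2)%N.
Proof. by rewrite card_monic_qpoly ?size_polyXn ?monicXn. Qed.

End DualNumbers.

Section QuotientByDualConstant.
Variables (F : finFieldType) (N : nat) (alpha beta : F).
Hypotheses (N_gt0 : (0 < N)%N) (beta_neq0 : beta != 0).
Local Notation R := (dualR F).
Local Notation emb := (qpolyC ('X^2 : {poly F})).
Local Notation H := ('X^N - (dual_elt alpha beta)%:P : {poly R}).
Local Notation S := {poly %/ H}.

Let H_gt1 : (1 < size H)%N. Proof. by rewrite size_XnsubC. Qed.
Let H_monic : H \is monic. Proof. exact: monicXnsubC. Qed.

Definition quot_of_poly : {rmorphism {poly F} -> S} :=
  GRing.RMorphism.clone _ _ (in_qpoly H \o map_poly emb) _.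

Lemma quot_of_polyE q : quot_of_poly q = in_qpoly H (map_poly emb q).
Proof. by []. Qed.

Lemma quot_of_poly_XnsubC :
  quot_of_poly ('X^N - alpha%:P) = in_qpoly H (emb beta * 'qX)%:P.
Proof.
have map_XnsubC : map_poly emb ('X^N - alpha%:P) = H + (emb beta * 'qX)%:P.
  by rewrite rmorphB /= map_polyXn map_polyC dual_eltE polyCD opprD addrA subrK.
by rewrite quot_of_polyE map_XnsubC rmorphD /= in_qpoly_self // add0r.
Qed.

Lemma quot_of_poly_XnsubC_sqr : quot_of_poly (('X^N - alpha%:P) ^+ 2) = 0.
Proof.
by rewrite rmorphXn quot_of_poly_XnsubC -rmorphXn -polyC_exp exprMn qX_sqr mulr0 rmorph0.
Qed.

Lemma quot_of_poly_dual (A B : {poly F}) :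
  quot_of_poly (A + (beta^-1)%:P * ('X^N - alpha%:P) * B) =
  in_qpoly H (map_poly emb A + 'qX%:P * map_poly emb B).
Proof.
have u_of_poly :
    quot_of_poly (beta^-1)%:P * quot_of_poly ('X^N - alpha%:P) = in_qpoly H 'qX%:P.
  rewrite quot_of_poly_XnsubC quot_of_polyE map_polyC -rmorphM -polyCM.
  by rewrite mulrA -[emb _ * emb _]rmorphM mulVf // rmorph1 mul1r.
by rewrite rmorphD !rmorphM u_of_poly [RHS]rmorphD [in RHS]rmorphM.
Qed.

Lemma quot_of_poly_surj (s : S) :
  exists2 q : {poly F}, (size q <= 2 * N)%N & quot_of_poly q = s.
Proof.
pose P := s : {poly R}.
pose A := \poly_(k < N) ((P`_k : R) : {poly F})`_0.
pose B := \poly_(k < N) ((P`_k : R) : {poly F})`_1.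
exists (A + (beta^-1)%:P * ('X^N - alpha%:P) * B).
  have sB : (size B <= N)%N by apply: size_poly.
  rewrite (leq_trans (size_polyD _ _)) // geq_max (leq_trans (size_poly _ _)) ?leq_pmull //=.
  rewrite -mulrA mul_polyC (leq_trans (size_scale_leq _ _)) //.
  rewrite (leq_trans (size_polyMleq _ _)) // size_XnsubC //; lia.
rewrite quot_of_poly_dual -[RHS]in_qpoly_qpoly; congr (in_qpoly H _).
have P_small : (size P <= N)%N.
  by rewrite -ltnS -(size_XnsubC (dual_elt alpha beta) N_gt0) size_qpoly.
apply/polyP => k; rewrite coefD coefCM !coef_map !coef_poly /=.
have [k_lt_N | k_ge_N] := ltnP k N.
  by rewrite mulrC -dual_eltE dual_eltK.
by rewrite !rmorph0 mulr0 addr0 nth_default // (leq_trans P_small).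
Qed.

Lemma card_quot : #|S| = (#|F| ^ (2 * N))%N.
Proof. by rewrite card_monic_qpoly // size_XnsubC //= card_dual -expnM. Qed.

(* Injectivity comes from counting: a surjection between sets of equal size. *)
Lemma quot_of_poly_inj :
  {in [pred q : {poly F} | size q <= 2 * N]%N &, injective quot_of_poly}.
Proof.
pose T (q : {poly_(2 * N) F}) : S := quot_of_poly q.
have T_inj : {in predT &, injective T}.
  apply/image_injP; rewrite eqn_leq leq_image_card /=.
  rewrite card_npoly -card_quot; apply: subset_leq_card; apply/subsetP => s _.
  have [q q_small <-] := quot_of_poly_surj s.
  by apply/imageP; exists (npolyp (2 * N) q); rewrite // /T npolypK.
move=> q q' q_small q'_small eq_qq'.
have /(congr1 val) : npolyp (2 * N) q = npolyp (2 * N) q'.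
  by apply: T_inj; rewrite // /T !npolypK.
by rewrite /= !npolypK.
Qed.

Lemma card_principal_ideal_quot (f f' : {poly F}) :
  f * f' = ('X^N - alpha%:P) ^+ 2 ->
  #|principal_ideal (quot_of_poly f)| = (#|F| ^ (size f').-1)%N.
Proof.
move=> ff'_eq; set e := (size f').-1.
have XnsubC_neq0 : 'X^N - alpha%:P != 0 :> {poly F}.
  by rewrite -size_poly_gt0 size_XnsubC.
have /norP[f_neq0 f'_neq0] : ~~ ((f == 0) || (f' == 0)).
  by rewrite -mulf_eq0 ff'_eq expf_neq0.
have size_ff' : (size f + e = (2 * N).+1)%N.
  have := size_exp ('X^N - alpha%:P) 2.
  rewrite -ff'_eq size_mul // size_XnsubC // /e.
  rewrite (polySpred f_neq0) (polySpred f'_neq0) addSn addnS /=; lia.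
pose M (q : {poly_e F}) : S := quot_of_poly ((q : {poly F}) * f).
have M_inj : injective M.
  have size_qf (r : {poly_e F}) : (size ((r : {poly F}) * f)%R <= 2 * N)%N.
    by rewrite (leq_trans (size_polyMleq _ _)) //; have := size_npoly r; lia.
  move=> q q' eq_Mqq'; apply: val_inj; apply: (mulIf f_neq0).
  by apply: quot_of_poly_inj; rewrite ?inE ?size_qf.
have -> : principal_ideal (quot_of_poly f) = [set M q | q in predT].
  apply/setP => b; rewrite inE; apply/existsP/imsetP => [[r /eqP ->]|[q _ ->]].
    have [q _ <-] := quot_of_poly_surj r.
    have q_mod_small : (size (q %% f')%R <= e)%N.
      by rewrite -ltnS prednK ?ltn_modp // size_poly_gt0.
    exists (npolyp e (q %% f')) => //.
    rewrite /M npolypK // -rmorphM {1}(divp_eq q f') mulrDl -mulrA.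
    by rewrite [f' * f]mulrC ff'_eq rmorphD rmorphM quot_of_poly_XnsubC_sqr mulr0 add0r mulrC.
  by exists (quot_of_poly q); rewrite /M rmorphM.
by rewrite card_imset // card_npoly.
Qed.

End QuotientByDualConstant.

Theorem theorem3p6 (F : finFieldType) (p m s : nat)
  (alpha alpha0 gamma beta : F) (i j : nat) :
  prime p -> odd p -> p \in [pchar F] ->
  (0 < m)%N -> (0 < s)%N ->
  #|F| = (p ^ m)%N -> (p ^ m %% 4 = 3)%N ->
  alpha != 0 -> (forall y : F, y ^+ 2 != alpha) ->
  alpha0 ^+ (p ^ s) = alpha ->
  gamma ^+ 4 + 4%:R * alpha0 = 0 ->
  beta != 0 ->
  (i <= 2 * p ^ s)%N -> (j <= 2 * p ^ s)%N ->
  let c := dual_elt alpha beta in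
  let g1 : {poly dualR F} :=
    'X^2 + (dual_const gamma)%:P * 'X + (dual_const (gamma ^+ 2 / 2%:R))%:P in
  let g2 : {poly dualR F} :=
    'X^2 - (dual_const gamma)%:P * 'X + (dual_const (gamma ^+ 2 / 2%:R))%:P in
  #|principal_ideal (in_qpoly ('X^(4 * p ^ s) - c%:P) (g1 ^+ i * g2 ^+ j))|
    = (p ^ (m * (8 * p ^ s - 2 * i - 2 * j)))%N.
Proof.
move=> p_prime p_odd p_char _ _ card_F _ _ _ alpha0_root gamma_root beta_neq0 i_le j_le.
move=> c g1 g2.
set P := (p ^ s)%N.
pose G1 : {poly F} := 'X^2 + gamma%:P * 'X + (gamma ^+ 2 / 2%:R)%:P.
pose G2 : {poly F} := 'X^2 + (- gamma)%:P * 'X + (gamma ^+ 2 / 2%:R)%:P.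
have G1G2 : (G1 * G2) ^+ P = 'X^(4 * P) - alpha%:P.
  rewrite (quartic_factor (natr2_neq0 p_odd p_char) gamma_root).
  by rewrite exprXnsubC_pchar // alpha0_root.
have cofactor : G1 ^+ i * G2 ^+ j * (G1 ^+ (2 * P - i) * G2 ^+ (2 * P - j))
    = ('X^(4 * P) - alpha%:P) ^+ 2.
  by rewrite mulrACA -!exprD !subnKC // -G1G2 -exprM exprMn mulnC.
have map_g : quot_of_poly (4 * P) alpha beta (G1 ^+ i * G2 ^+ j)
    = in_qpoly ('X^(4 * P) - c%:P) (g1 ^+ i * g2 ^+ j).
  rewrite quot_of_polyE rmorphM !rmorphXn /= !map_quadratic /g1 /g2 !dual_constE.
  by rewrite rmorphN polyCN mulNr.
rewrite -map_g (card_principal_ideal_quot _ beta_neq0 cofactor); last first.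
  by rewrite muln_gt0 expn_gt0 (prime_gt0 p_prime).
by rewrite size_quadratic_prod card_F -expnM; congr (p ^ (m * _))%N; lia.
Qed.
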